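(* Let $T=\left[\begin{smallmatrix} R & M\\ N & S\end{smallmatrix}\right]$ and $T'=\left[\begin{smallmatrix} R' & M'\\ N' & S'\end{smallmatrix}\right]$ be Morita context rings with $R,S,R',S'$ indecomposable. Then $\mathrm{Iso}_g(T,T')\subseteq\mathrm{Iso}_0(T,T')$.
   Context: All rings have an identity $1\neq 0$; a ring is indecomposable if its only central idempotents are $0$ and $1$. A Morita context $(R,S,M,N,f,g)$: rings $R,S$, an $R$-$S$-bimodule $M$, an $S$-$R$-bimodule $N$, bimodule morphisms $f:M\otimes_SN\to R$, $g:N\otimes_RM\to S$, with $[m,n]=f(m\otimes n)$, $(n,m)=g(n\otimes m)$ satisfying $[m,n]m'=m(n,m')$ and $n[m,n']=(n,m)n'$. Its Morita context ring $T$ consists of formal matrices $\left[\begin{smallmatrix} r & m\\ n & s\end{smallmatrix}\right]$ with entrywise addition and product $\left[\begin{smallmatrix} r & m\\ n & s\end{smallmatrix}\right]\left[\begin{smallmatrix} r' & m'\\ n' & s'\end{smallmatrix}\right]=\left[\begin{smallmatrix} rr'+[m,n'] & rm'+ms'\\ nr'+sn' & (n,m')+ss'\end{smallmatrix}\right]$; similarly for $T'$. Grading: $T_{-1}=\left[\begin{smallmatrix} 0 & 0\\ N & 0\end{smallmatrix}\right]$, $T_0=\left[\begin{smallmatrix} R & 0\\ 0 & S\end{smallmatrix}\right]$, $T_1=\left[\begin{smallmatrix} 0 & M\\ 0 & 0\end{smallmatrix}\right]$, $T_i=0$ otherwise. $\mathrm{Iso}_g(T,T')$ is the set of ring isomorphisms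 $\phi:T\to T'$ that are graded ($\phi(T_i)\subseteq T'_i$ for all $i$) or anti-graded ($\phi(T_i)\subseteq T'_{-i}$ for all $i$). $\mathrm{Iso}_0(T,T')=\mathrm{Iso}_0^0(T,T')\cup\mathrm{Iso}_0^1(T,T')$, where $\mathrm{Iso}_0^0(T,T')$ is the set of maps $\phi\left(\left[\begin{smallmatrix} r & m\\ n & s\end{smallmatrix}\right]\right)=\left[\begin{smallmatrix}\gamma(r) & \gamma(r)m'_0-m'_0\delta(s)+u(m)\\ n'_0\gamma(r)-\delta(s)n'_0+v(n) & \delta(s)\end{smallmatrix}\right]$ with $\gamma:R\to R'$, $\delta:S\to S'$ ring isomorphisms, $u:M\to M'$, $v:N\to N'$ additive bijections with $u(rms)=\gamma(r)u(m)\delta(s)$, $v(snr)=\delta(s)v(n)\gamma(r)$, and $m'_0\in M'$, $n'_0\in N'$ with $[m'_0,N']=0$, $(N',m'_0)=0$, $[M',n'_0]=0$, $(n'_0,M')=0$, $[u(m),v(n)]=\gamma([m,n])$, $(v(n),u(m))=\delta((n,m))$; and $\mathrm{Iso}_0^1(T,T')$ is the set of maps $\psi\left(\left[\begin{smallmatrix} r & m\\ n & s\end{smallmatrix}\right]\right)=\left[\begin{smallmatrix}\sigma(s) & m'_*\rho(r)-\sigma(s)m'_*+\nu(n)\\ \rho(r)n'_*-n'_*\sigma(s)+\mu(m) & \rho(r)\end{smallmatrix}\right]$ with $\rho:R\to S'$, $\sigma:S\to R'$ ring isomorphisms, $\mu:M\to N'$, $\nu:N\to M'$ additive bijections with $\mu(rms)=\rho(r)\mu(m)\sigma(s)$,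 $\nu(snr)=\sigma(s)\nu(n)\rho(r)$, and $m'_*\in M'$, $n'_*\in N'$ with $[m'_*,N']=0$, $(N',m'_* )=0$, $[M',n'_*]=0$, $(n'_*,M')=0$, $(\mu(m),\nu(n))=\rho([m,n])$, $[\nu(n),\mu(m)]=\sigma((n,m))$. *)

From HB Require Import structures.
From mathcomp Require Import all_boot all_order all_algebra.
Set Implicit Arguments. Unset Strict Implicit. Unset Printing Implicit Defensive.
Import GRing.Theory.
Local Open Scope ring_scope.

(* Rings have 1 <> 0 (nzRingType).
   lM / rM : left R- and right S-actions on M;  lN / rN : left S- and right
   R-actions on N.  f m n = [m,n] (an R-R bimodule map M (x)_S N -> R, given
   as an S-balanced biadditive map), g n m = (n,m) (an S-S bimodule map
   N (x)_R M -> S, given as an R-balanced biadditive map). *)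
Record morita_context := MoritaContext {
  mc_R : nzRingType; mc_S : nzRingType; mc_M : zmodType; mc_N : zmodType;
  mc_lM : mc_R -> mc_M -> mc_M; mc_rM : mc_M -> mc_S -> mc_M;
  mc_lN : mc_S -> mc_N -> mc_N; mc_rN : mc_N -> mc_R -> mc_N;
  mc_f : mc_M -> mc_N -> mc_R; mc_g : mc_N -> mc_M -> mc_S;
  mc_lMDr : forall r m1 m2, mc_lM r (m1 + m2) = mc_lM r m1 + mc_lM r m2;
  mc_lMDl : forall r1 r2 m, mc_lM (r1 + r2) m = mc_lM r1 m + mc_lM r2 m;
  mc_lMA : forall r1 r2 m, mc_lM (r1 * r2) m = mc_lM r1 (mc_lM r2 m);
  mc_lM1 : forall m, mc_lM 1 m = m;
  mc_rMDl : forall m1 m2 s, mc_rM (m1 + m2) s = mc_rM m1 s + mc_rM m2 s;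
  mc_rMDr : forall m s1 s2, mc_rM m (s1 + s2) = mc_rM m s1 + mc_rM m s2;
  mc_rMA : forall m s1 s2, mc_rM m (s1 * s2) = mc_rM (mc_rM m s1) s2;
  mc_rM1 : forall m, mc_rM m 1 = m;
  mc_MA : forall r m s, mc_rM (mc_lM r m) s = mc_lM r (mc_rM m s);
  mc_lNDr : forall s n1 n2, mc_lN s (n1 + n2) = mc_lN s n1 + mc_lN s n2;
  mc_lNDl : forall s1 s2 n, mc_lN (s1 + s2) n = mc_lN s1 n + mc_lN s2 n;
  mc_lNA : forall s1 s2 n, mc_lN (s1 * s2) n = mc_lN s1 (mc_lN s2 n);
  mc_lN1 : forall n, mc_lN 1 n = n;
  mc_rNDl : forall n1 n2 r, mc_rN (n1 + n2) r = mc_rN n1 r + mc_rN n2 r;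
  mc_rNDr : forall n r1 r2, mc_rN n (r1 + r2) = mc_rN n r1 + mc_rN n r2;
  mc_rNA : forall n r1 r2, mc_rN n (r1 * r2) = mc_rN (mc_rN n r1) r2;
  mc_rN1 : forall n, mc_rN n 1 = n;
  mc_NA : forall s n r, mc_rN (mc_lN s n) r = mc_lN s (mc_rN n r);
  mc_fDl : forall m1 m2 n, mc_f (m1 + m2) n = mc_f m1 n + mc_f m2 n;
  mc_fDr : forall m n1 n2, mc_f m (n1 + n2) = mc_f m n1 + mc_f m n2;
  mc_f_bal : forall m s n, mc_f (mc_rM m s) n = mc_f m (mc_lN s n);
  mc_f_l : forall r m n, mc_f (mc_lM r m) n = r * mc_f m n;
  mc_f_r : forall m n r, mc_f m (mc_rN n r) = mc_f m n * r;
  mc_gDl : forall n1 n2 m, mc_g (n1 + n2) m = mc_g n1 m + mc_g n2 m;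
  mc_gDr : forall n m1 m2, mc_g n (m1 + m2) = mc_g n m1 + mc_g n m2;
  mc_g_bal : forall n r m, mc_g (mc_rN n r) m = mc_g n (mc_lM r m);
  mc_g_l : forall s n m, mc_g (mc_lN s n) m = s * mc_g n m;
  mc_g_r : forall n m s, mc_g n (mc_rM m s) = mc_g n m * s;
  mc_assoc1 : forall m n m', mc_lM (mc_f m n) m' = mc_rM m (mc_g n m');
  mc_assoc2 : forall n m n', mc_rN n (mc_f m n') = mc_lN (mc_g n m) n'
}.

(* Elements of the Morita context ring T: formal matrices [r m; n s]. *)
Record mcT (C : morita_context) := MCT {
  t_r : mc_R C; t_m : mc_M C; t_n : mc_N C; t_s : mc_S C }.

Definition mcT_zero (C : morita_context) : mcT C := @MCT C 0 0 0 0.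
Definition mcT_one (C : morita_context) : mcT C := @MCT C 1 0 0 1.
Definition mcT_add (C : morita_context) (x y : mcT C) : mcT C :=
  @MCT C (t_r x + t_r y) (t_m x + t_m y) (t_n x + t_n y) (t_s x + t_s y).
Definition mcT_mul (C : morita_context) (x y : mcT C) : mcT C :=
  @MCT C (t_r x * t_r y + mc_f (t_m x) (t_n y))
        (mc_lM (t_r x) (t_m y) + mc_rM (t_m x) (t_s y))
        (mc_rN (t_n x) (t_r y) + mc_lN (t_s x) (t_n y))
        (mc_g (t_n x) (t_m y) + t_s x * t_s y).

Definition mcT_ring_iso (C C' : morita_context) (phi : mcT C -> mcT C') : Prop :=
  bijective phi /\
  (forall x y, phi (mcT_add x y) = mcT_add (phi x) (phi y)) /\
  (forall x y, phi (mcT_mul x y) = mcT_mul (phi x) (phi y)) /\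
  phi (mcT_one C) = mcT_one C'.

Definition ring_iso (A B : nzRingType) (h : A -> B) : Prop :=
  bijective h /\ {morph h : x y / x + y} /\ {morph h : x y / x * y} /\ h 1 = 1.

Definition add_bij (A B : zmodType) (h : A -> B) : Prop :=
  bijective h /\ {morph h : x y / x + y}.

Definition indecomposable (A : nzRingType) : Prop :=
  forall e : A, e * e = e -> (forall x : A, e * x = x * e) -> e = 0 \/ e = 1.

Definition mc_grade (C : morita_context) (i : int) (x : mcT C) : Prop :=
  if i == 0 then t_m x = 0 /\ t_n x = 0
  else if i == 1 then t_r x = 0 /\ t_n x = 0 /\ t_s x = 0
  else if i == -1 then t_r x = 0 /\ t_m x = 0 /\ t_s x = 0
  else x = mcT_zero C.

Definition graded_map (C C' : morita_context) (phi : mcT C -> mcT C') : Prop :=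
  forall (i : int) (x : mcT C), mc_grade i x -> mc_grade i (phi x).

Definition antigraded_map (C C' : morita_context) (phi : mcT C -> mcT C') : Prop :=
  forall (i : int) (x : mcT C), mc_grade i x -> mc_grade (- i) (phi x).

Definition Iso_g (C C' : morita_context) (phi : mcT C -> mcT C') : Prop :=
  mcT_ring_iso phi /\ (graded_map phi \/ antigraded_map phi).

Definition Iso_00 (C C' : morita_context) (phi : mcT C -> mcT C') : Prop :=
  exists (gam : mc_R C -> mc_R C') (del : mc_S C -> mc_S C')
         (u : mc_M C -> mc_M C') (v : mc_N C -> mc_N C')
         (m0 : mc_M C') (n0 : mc_N C'),
  ring_iso gam /\ ring_iso del /\ add_bij u /\ add_bij v /\
      (forall r m s, u (mc_rM (mc_lM r m) s) = mc_rM (mc_lM (gam r) (u m)) (del s)) /\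
      (forall s n r, v (mc_rN (mc_lN s n) r) = mc_rN (mc_lN (del s) (v n)) (gam r)) /\
      (forall n' : mc_N C', mc_f m0 n' = 0) /\ (forall n' : mc_N C', mc_g n' m0 = 0) /\
      (forall m' : mc_M C', mc_f m' n0 = 0) /\ (forall m' : mc_M C', mc_g n0 m' = 0) /\
      (forall m n, mc_f (u m) (v n) = gam (mc_f m n)) /\
      (forall m n, mc_g (v n) (u m) = del (mc_g n m)) /\
      (forall x : mcT C, phi x =
         @MCT C' (gam (t_r x))
                (mc_lM (gam (t_r x)) m0 - mc_rM m0 (del (t_s x)) + u (t_m x))
                (mc_rN n0 (gam (t_r x)) - mc_lN (del (t_s x)) n0 + v (t_n x))
                (del (t_s x))).

Definition Iso_01 (C C' : morita_context) (phi : mcT C -> mcT C') : Prop :=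
  exists (rho : mc_R C -> mc_S C') (sig : mc_S C -> mc_R C')
         (mu : mc_M C -> mc_N C') (nu : mc_N C -> mc_M C')
         (ms : mc_M C') (ns : mc_N C'),
  ring_iso rho /\ ring_iso sig /\ add_bij mu /\ add_bij nu /\
      (forall r m s, mu (mc_rM (mc_lM r m) s) = mc_rN (mc_lN (rho r) (mu m)) (sig s)) /\
      (forall s n r, nu (mc_rN (mc_lN s n) r) = mc_rM (mc_lM (sig s) (nu n)) (rho r)) /\
      (forall n' : mc_N C', mc_f ms n' = 0) /\ (forall n' : mc_N C', mc_g n' ms = 0) /\
      (forall m' : mc_M C', mc_f m' ns = 0) /\ (forall m' : mc_M C', mc_g ns m' = 0) /\
      (forall m n, mc_g (mu m) (nu n) = rho (mc_f m n)) /\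
      (forall m n, mc_f (nu n) (mu m) = sig (mc_g n m)) /\
      (forall x : mcT C, phi x =
         @MCT C' (sig (t_s x))
                (mc_rM ms (rho (t_r x)) - mc_lM (sig (t_s x)) ms + nu (t_n x))
                (mc_lN (rho (t_r x)) ns - mc_rN ns (sig (t_s x)) + mu (t_m x))
                (rho (t_r x))).

Definition Iso_0 (C C' : morita_context) (phi : mcT C -> mcT C') : Prop :=
  Iso_00 phi \/ Iso_01 phi.

From mathcomp Require Import all_boot all_order all_algebra.
Set Implicit Arguments. Unset Strict Implicit. Unset Printing Implicit Defensive.
Import GRing.Theory.
Local Open Scope ring_scope.

(* Let phi : T -> T' be a graded or anti-graded ring isomorphism.  Then phi
   maps the diagonal T_0 = R x S onto T'_0 and off-diagonal elements to
   off-diagonal elements, so phi e1 = diag(a,b) for the idempotent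
   e1 = diag(1,0), where a and b are central idempotents of R' and S'.
   Indecomposability of R' and S' gives a, b in {0,1}, and injectivity of
   phi rules out a = b; hence phi e1 is e1' or e2' = diag(0,1).
   - If phi e1 = e1', phi preserves the Peirce corners e_i T e_j, so it acts
     entrywise, and its entries are the data of Iso_0^0 (with m0 = n0 = 0).
   - If phi e1 = e2', composing phi with the canonical isomorphism from T'
     onto the ring of the transposed context (R' and S', M' and N' swapped)
     reduces to the first case; Iso_0^0 data for the composite are Iso_0^1
     data for phi. *)

Lemma double_eq_self0 (V : zmodType) (x : V) : x = x + x -> x = 0.
Proof. by move=> xx; apply: (addrI x); rewrite addr0 -xx. Qed.

Lemma additive_zero (U V : zmodType) (h : U -> V) :
  {morph h : x y / x + y} -> h 0 = 0.
Proof. by move=> hD; apply: double_eq_self0; rewrite -hD addr0. Qed.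

Section ContextZero.
Variable C : morita_context.

Lemma mc_f0l n : mc_f (0 : mc_M C) n = 0.
Proof. exact: (additive_zero (fun m => mc_fDl m ^~ n)). Qed.
Lemma mc_f0r m : mc_f m (0 : mc_N C) = 0.
Proof. exact: (additive_zero (mc_fDr m)). Qed.
Lemma mc_g0l m : mc_g (0 : mc_N C) m = 0.
Proof. exact: (additive_zero (fun n => mc_gDl n ^~ m)). Qed.
Lemma mc_g0r n : mc_g n (0 : mc_M C) = 0.
Proof. exact: (additive_zero (mc_gDr n)). Qed.
Lemma mc_lM0l m : mc_lM (0 : mc_R C) m = 0.
Proof. exact: (additive_zero (fun r => mc_lMDl r ^~ m)). Qed.
Lemma mc_lM0r (r : mc_R C) : mc_lM r 0 = 0.
Proof. exact: (additive_zero (mc_lMDr r)). Qed.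
Lemma mc_rM0l (s : mc_S C) : mc_rM 0 s = 0.
Proof. exact: (additive_zero (fun m => mc_rMDl m ^~ s)). Qed.
Lemma mc_rM0r m : mc_rM m (0 : mc_S C) = 0.
Proof. exact: (additive_zero (mc_rMDr m)). Qed.
Lemma mc_lN0l n : mc_lN (0 : mc_S C) n = 0.
Proof. exact: (additive_zero (fun s => mc_lNDl s ^~ n)). Qed.
Lemma mc_lN0r (s : mc_S C) : mc_lN s 0 = 0.
Proof. exact: (additive_zero (mc_lNDr s)). Qed.
Lemma mc_rN0l (r : mc_R C) : mc_rN 0 r = 0.
Proof. exact: (additive_zero (fun n => mc_rNDl n ^~ r)). Qed.
Lemma mc_rN0r n : mc_rN n (0 : mc_R C) = 0.
Proof. exact: (additive_zero (mc_rNDr n)). Qed.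

End ContextZero.

Ltac mcT_simpl := rewrite /mcT_mul /mcT_add /=;
  do 3 rewrite ?mc_f0l ?mc_f0r ?mc_g0l ?mc_g0r ?mc_lM0l ?mc_lM0r ?mc_rM0l
   ?mc_rM0r ?mc_lN0l ?mc_lN0r ?mc_rN0l ?mc_rN0r ?mc_lM1 ?mc_rM1 ?mc_lN1
   ?mc_rN1 ?mulr0 ?mul0r ?mulr1 ?mul1r ?addr0 ?add0r.

Definition mcT_e1 (C : morita_context) : mcT C := MCT 1 0 0 0.
Definition mcT_e2 (C : morita_context) : mcT C := MCT 0 0 0 1.

Section Peirce.
Variables (C : morita_context) (Y : mcT C).

Lemma peirce11 : mcT_mul (mcT_mul (mcT_e1 C) Y) (mcT_e1 C) = MCT (t_r Y) 0 0 0.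
Proof. by case: Y => r m n s; mcT_simpl. Qed.
Lemma peirce12 : mcT_mul (mcT_mul (mcT_e1 C) Y) (mcT_e2 C) = MCT 0 (t_m Y) 0 0.
Proof. by case: Y => r m n s; mcT_simpl. Qed.
Lemma peirce21 : mcT_mul (mcT_mul (mcT_e2 C) Y) (mcT_e1 C) = MCT 0 0 (t_n Y) 0.
Proof. by case: Y => r m n s; mcT_simpl. Qed.
Lemma peirce22 : mcT_mul (mcT_mul (mcT_e2 C) Y) (mcT_e2 C) = MCT 0 0 0 (t_s Y).
Proof. by case: Y => r m n s; mcT_simpl. Qed.

Lemma peirce_sum : Y = mcT_add (mcT_add (mcT_add (MCT (t_r Y) 0 0 0)
  (MCT 0 (t_m Y) 0 0)) (MCT 0 0 (t_n Y) 0)) (MCT 0 0 0 (t_s Y)).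
Proof. by case: Y => r m n s; mcT_simpl. Qed.

End Peirce.

Section RingIso.
Variables (C C' : morita_context) (phi : mcT C -> mcT C').
Hypothesis phi_iso : mcT_ring_iso phi.

Lemma ring_iso_inj : injective phi.
Proof. by case: phi_iso => /bij_inj. Qed.

Lemma ring_iso_zero : phi (mcT_zero C) = mcT_zero C'.
Proof.
case: phi_iso => _ [phi_add _].
have := phi_add (mcT_zero C) (mcT_zero C).
rewrite {1}/mcT_add /mcT_zero /= !addr0 -/(mcT_zero C).
case: (phi _) => r m n s; rewrite /mcT_add /=.
by case=> /double_eq_self0-> /double_eq_self0-> /double_eq_self0-> /double_eq_self0->.
Qed.

(* phi e1 + phi e2 = phi 1 = 1, so phi fixing e1 also fixes e2. *)
Lemma ring_iso_e2 : phi (mcT_e1 C) = mcT_e1 C' -> phi (mcT_e2 C) = mcT_e2 C'.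
Proof.
case: phi_iso => _ [phi_add [_ phi_one]] phi_e1.
have := phi_add (mcT_e1 C) (mcT_e2 C).
rewrite {1}/mcT_add /= !addr0 !add0r -/(mcT_one C) phi_one phi_e1.
case: (phi _) => r m n s; rewrite /mcT_add /= !add0r => -[r0 <- <- <-].
by congr MCT; apply: (addrI 1); rewrite addr0 -r0.
Qed.

End RingIso.

Definition mcT_entrywise (C C' : morita_context)
    (gam : mc_R C -> mc_R C') (u : mc_M C -> mc_M C')
    (v : mc_N C -> mc_N C') (del : mc_S C -> mc_S C') (x : mcT C) : mcT C' :=
  MCT (gam (t_r x)) (u (t_m x)) (v (t_n x)) (del (t_s x)).

(* A ring isomorphism acting entrywise belongs to Iso_0^0, with m0 = n0 = 0:
   additivity, multiplicativity and bijectivity of phi, read off entry by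
   entry, give exactly the defining properties of gam, del, u, v. *)
Section EntrywiseIso.
Variables (C C' : morita_context) (phi : mcT C -> mcT C').
Variables (gam : mc_R C -> mc_R C') (u : mc_M C -> mc_M C').
Variables (v : mc_N C -> mc_N C') (del : mc_S C -> mc_S C').
Hypothesis phi_iso : mcT_ring_iso phi.
Hypothesis phiE : phi =1 mcT_entrywise gam u v del.

Let phi_add x y : phi (mcT_add x y) = mcT_add (phi x) (phi y).
Proof. by case: phi_iso => _ []. Qed.
Let phi_mul x y : phi (mcT_mul x y) = mcT_mul (phi x) (phi y).
Proof. by case: phi_iso => _ [_ []]. Qed.

Lemma entrywise_gamD : {morph gam : a b / a + b}.
Proof.
by move=> a b; have := phi_add (MCT a 0 0 0) (MCT b 0 0 0); rewrite !phiE => -[].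
Qed.
Lemma entrywise_uD : {morph u : a b / a + b}.
Proof.
by move=> a b; have := phi_add (MCT 0 a 0 0) (MCT 0 b 0 0); rewrite !phiE => -[].
Qed.
Lemma entrywise_vD : {morph v : a b / a + b}.
Proof.
by move=> a b; have := phi_add (MCT 0 0 a 0) (MCT 0 0 b 0); rewrite !phiE => -[].
Qed.
Lemma entrywise_delD : {morph del : a b / a + b}.
Proof.
by move=> a b; have := phi_add (MCT 0 0 0 a) (MCT 0 0 0 b); rewrite !phiE => -[].
Qed.

Let gam0 := additive_zero entrywise_gamD.
Let u0 := additive_zero entrywise_uD.
Let v0 := additive_zero entrywise_vD.
Let del0 := additive_zero entrywise_delD.

Lemma entrywise_gamM : {morph gam : a b / a * b}.
Proof.
move=> a b; have := phi_mul (MCT a 0 0 0) (MCT b 0 0 0).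
by rewrite !phiE /mcT_entrywise /= u0 v0; mcT_simpl => -[].
Qed.
Lemma entrywise_delM : {morph del : a b / a * b}.
Proof.
move=> a b; have := phi_mul (MCT 0 0 0 a) (MCT 0 0 0 b).
by rewrite !phiE /mcT_entrywise /= u0 v0; mcT_simpl => -[].
Qed.
Lemma entrywise_uM r m s : u (mc_rM (mc_lM r m) s) = mc_rM (mc_lM (gam r) (u m)) (del s).
Proof.
have uL : u (mc_lM r m) = mc_lM (gam r) (u m).
  have := phi_mul (MCT r 0 0 0) (MCT 0 m 0 0).
  by rewrite !phiE /mcT_entrywise /= u0 v0 del0; mcT_simpl => -[].
have := phi_mul (MCT 0 (mc_lM r m) 0 0) (MCT 0 0 0 s).
by rewrite !phiE /mcT_entrywise /= gam0 u0 v0 uL; mcT_simpl => -[].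
Qed.
Lemma entrywise_vM s n r : v (mc_rN (mc_lN s n) r) = mc_rN (mc_lN (del s) (v n)) (gam r).
Proof.
have vL : v (mc_lN s n) = mc_lN (del s) (v n).
  have := phi_mul (MCT 0 0 0 s) (MCT 0 0 n 0).
  by rewrite !phiE /mcT_entrywise /= gam0 u0 v0; mcT_simpl => -[].
have := phi_mul (MCT 0 0 (mc_lN s n) 0) (MCT r 0 0 0).
by rewrite !phiE /mcT_entrywise /= u0 v0 del0 vL; mcT_simpl => -[].
Qed.
Lemma entrywise_f m n : mc_f (u m) (v n) = gam (mc_f m n).
Proof.
have := phi_mul (MCT 0 m 0 0) (MCT 0 0 n 0).
by rewrite !phiE /mcT_entrywise /= gam0 u0 v0 del0; mcT_simpl => -[].
Qed.
Lemma entrywise_g m n : mc_g (v n) (u m) = del (mc_g n m).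
Proof.
have := phi_mul (MCT 0 0 n 0) (MCT 0 m 0 0).
by rewrite !phiE /mcT_entrywise /= gam0 u0 v0 del0; mcT_simpl => -[].
Qed.

(* The entries of phi inherit bijectivity: an inverse of, e.g., gam is read
   off the (1,1)-entry of the inverse of phi. *)
Let phi_bij : bijective phi. Proof. by case: phi_iso. Qed.

Lemma entrywise_gam_bij : bijective gam.
Proof.
have [g phiK gK] := phi_bij; exists (fun a => t_r (g (MCT a 0 0 0))) => a.
  have phi_a : phi (MCT a 0 0 0) = MCT (gam a) 0 0 0
    by rewrite phiE /mcT_entrywise /= u0 v0 del0.
  by rewrite -phi_a phiK.
by have := phiE (g (MCT a 0 0 0)); rewrite gK => -[].
Qed.
Lemma entrywise_u_bij : bijective u.
Proof.
have [g phiK gK] := phi_bij; exists (fun a => t_m (g (MCT 0 a 0 0))) => a.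
  have phi_a : phi (MCT 0 a 0 0) = MCT 0 (u a) 0 0
    by rewrite phiE /mcT_entrywise /= gam0 v0 del0.
  by rewrite -phi_a phiK.
by have := phiE (g (MCT 0 a 0 0)); rewrite gK => -[].
Qed.
Lemma entrywise_v_bij : bijective v.
Proof.
have [g phiK gK] := phi_bij; exists (fun a => t_n (g (MCT 0 0 a 0))) => a.
  have phi_a : phi (MCT 0 0 a 0) = MCT 0 0 (v a) 0
    by rewrite phiE /mcT_entrywise /= gam0 u0 del0.
  by rewrite -phi_a phiK.
by have := phiE (g (MCT 0 0 a 0)); rewrite gK => -[].
Qed.
Lemma entrywise_del_bij : bijective del.
Proof.
have [g phiK gK] := phi_bij; exists (fun a => t_s (g (MCT 0 0 0 a))) => a.
  have phi_a : phi (MCT 0 0 0 a) = MCT 0 0 0 (del a)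
    by rewrite phiE /mcT_entrywise /= gam0 u0 v0.
  by rewrite -phi_a phiK.
by have := phiE (g (MCT 0 0 0 a)); rewrite gK => -[].
Qed.

Lemma entrywise_unital : gam 1 = 1 /\ del 1 = 1.
Proof. by case: phi_iso => _ [_ [_]]; rewrite phiE => -[]. Qed.

Lemma entrywise_Iso_00 : Iso_00 phi.
Proof.
have [gam1 del1] := entrywise_unital.
exists gam, del, u, v, 0, 0.
split.
  exact: (conj entrywise_gam_bij (conj entrywise_gamD (conj entrywise_gamM gam1))).
split.
  exact: (conj entrywise_del_bij (conj entrywise_delD (conj entrywise_delM del1))).
split; first exact: (conj entrywise_u_bij entrywise_uD).
split; first exact: (conj entrywise_v_bij entrywise_vD).
split; first exact: entrywise_uM.
split; first exact: entrywise_vM.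
do 4 (split; first by move=> ?; rewrite ?mc_f0l ?mc_f0r ?mc_g0l ?mc_g0r).
split; first exact: entrywise_f.
split; first exact: entrywise_g.
by move=> x; rewrite phiE; mcT_simpl; rewrite !oppr0 !add0r.
Qed.

End EntrywiseIso.

(* A ring isomorphism fixing e1 (hence e2) preserves each Peirce corner
   e_i T e_j, so it acts entrywise. *)
Lemma e1_fixing_entrywise (C C' : morita_context) (phi : mcT C -> mcT C') :
  mcT_ring_iso phi -> phi (mcT_e1 C) = mcT_e1 C' ->
  phi =1 mcT_entrywise (fun r => t_r (phi (MCT r 0 0 0)))
    (fun m => t_m (phi (MCT 0 m 0 0))) (fun n => t_n (phi (MCT 0 0 n 0)))
    (fun s => t_s (phi (MCT 0 0 0 s))).
Proof.
move=> phi_iso phi_e1; have phi_e2 := ring_iso_e2 phi_iso phi_e1.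
case: (phi_iso) => _ [phi_add [phi_mul _]].
have corner i j Y :
    phi (mcT_mul (mcT_mul i Y) j) = mcT_mul (mcT_mul (phi i) (phi Y)) (phi j).
  by rewrite !phi_mul.
have phiR r : phi (MCT r 0 0 0) = MCT (t_r (phi (MCT r 0 0 0))) 0 0 0.
  by rewrite -{1}[MCT r 0 0 0](peirce11 (MCT r 0 0 0)) corner phi_e1 peirce11.
have phiM m : phi (MCT 0 m 0 0) = MCT 0 (t_m (phi (MCT 0 m 0 0))) 0 0.
  by rewrite -{1}[MCT 0 m 0 0](peirce12 (MCT 0 m 0 0)) corner phi_e1 phi_e2 peirce12.
have phiN n : phi (MCT 0 0 n 0) = MCT 0 0 (t_n (phi (MCT 0 0 n 0))) 0.
  by rewrite -{1}[MCT 0 0 n 0](peirce21 (MCT 0 0 n 0)) corner phi_e1 phi_e2 peirce21.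
have phiS s : phi (MCT 0 0 0 s) = MCT 0 0 0 (t_s (phi (MCT 0 0 0 s))).
  by rewrite -{1}[MCT 0 0 0 s](peirce22 (MCT 0 0 0 s)) corner phi_e2 peirce22.
by move=> x; rewrite [x in phi x]peirce_sum !phi_add phiR phiM phiN phiS; mcT_simpl.
Qed.

Definition mc_transpose (C : morita_context) : morita_context := {|
  mc_R := mc_S C; mc_S := mc_R C; mc_M := mc_N C; mc_N := mc_M C;
  mc_lM := @mc_lN C; mc_rM := @mc_rN C; mc_lN := @mc_lM C; mc_rN := @mc_rM C;
  mc_f := @mc_g C; mc_g := @mc_f C;
  mc_lMDr := @mc_lNDr C; mc_lMDl := @mc_lNDl C; mc_lMA := @mc_lNA C;
  mc_lM1 := @mc_lN1 C; mc_rMDl := @mc_rNDl C; mc_rMDr := @mc_rNDr C;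
  mc_rMA := @mc_rNA C; mc_rM1 := @mc_rN1 C; mc_MA := @mc_NA C;
  mc_lNDr := @mc_lMDr C; mc_lNDl := @mc_lMDl C; mc_lNA := @mc_lMA C;
  mc_lN1 := @mc_lM1 C; mc_rNDl := @mc_rMDl C; mc_rNDr := @mc_rMDr C;
  mc_rNA := @mc_rMA C; mc_rN1 := @mc_rM1 C; mc_NA := @mc_MA C;
  mc_fDl := @mc_gDl C; mc_fDr := @mc_gDr C; mc_f_bal := @mc_g_bal C;
  mc_f_l := @mc_g_l C; mc_f_r := @mc_g_r C;
  mc_gDl := @mc_fDl C; mc_gDr := @mc_fDr C; mc_g_bal := @mc_f_bal C;
  mc_g_l := @mc_f_l C; mc_g_r := @mc_f_r C;
  mc_assoc1 := fun n m n' => esym (@mc_assoc2 C n m n');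
  mc_assoc2 := fun m n m' => esym (@mc_assoc1 C m n m') |}.

Definition mcT_transpose (C : morita_context) (x : mcT C) : mcT (mc_transpose C) :=
  @MCT (mc_transpose C) (t_s x) (t_n x) (t_m x) (t_r x).

(* Transposition is a ring isomorphism; products only differ by the order of
   the two summands in each entry. *)
Lemma mcT_transpose_ring_iso (C : morita_context) : mcT_ring_iso (@mcT_transpose C).
Proof.
split.
  exists (fun y : mcT (mc_transpose C) => @MCT C (t_s y) (t_n y) (t_m y) (t_r y)).
    by case.
  by case.
split; first by case=> r m n s [r' m' n' s'].
split; last by [].
move=> [r m n s] [r' m' n' s'].
by rewrite /mcT_transpose /mcT_mul /=; congr MCT; exact: addrC.
Qed.

Lemma mcT_ring_iso_comp (C1 C2 C3 : morita_context)
    (phi : mcT C1 -> mcT C2) (psi : mcT C2 -> mcT C3) :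
  mcT_ring_iso phi -> mcT_ring_iso psi -> mcT_ring_iso (psi \o phi).
Proof.
move=> [phi_bij [phi_add [phi_mul phi_one]]] [psi_bij [psi_add [psi_mul psi_one]]].
split; first exact: bij_comp.
by split; [|split] => /= *; rewrite ?phi_add ?psi_add ?phi_mul ?psi_mul ?phi_one.
Qed.

(* Iso_0^1 data for phi : T -> T' is exactly Iso_0^0 data for the composite
   of phi with T' -> T'^t (with the roles of m0 and n0 exchanged). *)
Lemma transpose_Iso_00_Iso_01 (C C' : morita_context) (phi : mcT C -> mcT C') :
  Iso_00 (@mcT_transpose C' \o phi) -> Iso_01 phi.
Proof.
case=> gam [del [u [v [m0 [n0 [gam_iso [del_iso [u_bij [v_bij [uM [vM
  [m0f [m0g [n0f [n0g [uvf [vug psiE]]]]]]]]]]]]]]]]].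
exists gam, del, u, v, n0, m0.
do 12 (split; first by []).
move=> x; have := psiE x; rewrite /mcT_transpose /=.
by case: (phi x) => r m n s [-> -> -> ->].
Qed.

Lemma e1_to_e2_Iso_01 (C C' : morita_context) (phi : mcT C -> mcT C') :
  mcT_ring_iso phi -> phi (mcT_e1 C) = mcT_e2 C' -> Iso_01 phi.
Proof.
move=> phi_iso phi_e1; apply: transpose_Iso_00_Iso_01.
have psi_iso := mcT_ring_iso_comp phi_iso (mcT_transpose_ring_iso C').
by apply: (entrywise_Iso_00 psi_iso (e1_fixing_entrywise psi_iso _)); rewrite /= phi_e1.
Qed.

Definition mcT_diagonal (C : morita_context) (x : mcT C) : Prop :=
  t_m x = 0 /\ t_n x = 0.
Definition mcT_offdiagonal (C : morita_context) (x : mcT C) : Prop :=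
  t_r x = 0 /\ t_s x = 0.

Lemma mc_grade_offdiagonal (C : morita_context) (i : int) (x : mcT C) :
  i != 0 -> mc_grade i x -> mcT_offdiagonal x.
Proof.
rewrite /mc_grade /mcT_offdiagonal => /negbTE->.
case: (i == 1); first by case=> -> [_ ->].
by case: (i == -1) => [[-> [_ ->]]|->].
Qed.

(* A graded or anti-graded additive map preserves the diagonal T_0 and the
   off-diagonal part, as the latter is spanned by T_1 and T_{-1}. *)
Lemma graded_preserves_blocks (C C' : morita_context) (phi : mcT C -> mcT C') :
  mcT_ring_iso phi -> graded_map phi \/ antigraded_map phi ->
  (forall x, mcT_diagonal x -> mcT_diagonal (phi x)) /\
  (forall x, mcT_offdiagonal x -> mcT_offdiagonal (phi x)).
Proof.
case=> _ [phi_add _] phi_gr.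
have phi_offdiag i x : i != 0 -> mc_grade i x -> mcT_offdiagonal (phi x).
  move=> i_neq0; case: phi_gr => gr /gr; apply: mc_grade_offdiagonal => //.
  by rewrite oppr_eq0.
split=> [x|[r m n s] [/= -> ->]]; first by case: phi_gr => gr; apply: (gr 0).
have -> : @MCT C 0 m n 0 = mcT_add (MCT 0 m 0 0) (MCT 0 0 n 0) by mcT_simpl.
have [rM sM] : mcT_offdiagonal (phi (MCT 0 m 0 0)) by apply: (phi_offdiag 1).
have [rN sN] : mcT_offdiagonal (phi (MCT 0 0 n 0)) by apply: (phi_offdiag (-1)).
by rewrite phi_add; split; rewrite /= ?rM ?sM ?rN ?sN addr0.
Qed.

Lemma mcT_diag_off_sum (C : morita_context) (x : mcT C) :
  x = mcT_add (MCT (t_r x) 0 0 (t_s x)) (MCT 0 (t_m x) (t_n x) 0).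
Proof. by case: x => r m n s; mcT_simpl. Qed.

Lemma mcT_e1_comm_diagonal (C : morita_context) (d : mcT C) :
  mcT_diagonal d -> mcT_mul (mcT_e1 C) d = mcT_mul d (mcT_e1 C).
Proof. by case: d => r m n s [/= -> ->]; mcT_simpl. Qed.

Section BlockPreserving.
Variables (C C' : morita_context) (phi : mcT C -> mcT C').
Hypothesis phi_iso : mcT_ring_iso phi.
Hypothesis phi_diag : forall x, mcT_diagonal x -> mcT_diagonal (phi x).
Hypothesis phi_off : forall x, mcT_offdiagonal x -> mcT_offdiagonal (phi x).

(* The diagonal T'_0 is the image of T_0: the diagonal part of the preimage
   of a diagonal element is again a preimage. *)
Lemma diagonal_onto d' :
  mcT_diagonal d' -> exists d, mcT_diagonal d /\ phi d = d'.
Proof.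
case: (phi_iso) => [[g _ gK] [phi_add _]] [d'm d'n].
set y := g d'; exists (MCT (t_r y) 0 0 (t_s y)); split=> //.
have [Dm Dn] : mcT_diagonal (phi (MCT (t_r y) 0 0 (t_s y))) by apply: phi_diag.
have [Or Os] : mcT_offdiagonal (phi (MCT 0 (t_m y) (t_n y) 0)) by apply: phi_off.
move: (gK d') d'm d'n; rewrite -/y {1}(mcT_diag_off_sum y) phi_add => <-.
move: Dm Dn Or Os; case: (phi (MCT _ 0 0 _)) => a b c e; case: (phi (MCT 0 _ _ 0)).
by move=> a' b' c' e' /= -> -> -> ->; mcT_simpl => -> ->.
Qed.

Let phi_mul x y : phi (mcT_mul x y) = mcT_mul (phi x) (phi y).
Proof. by case: phi_iso => _ [_ []]. Qed.

(* phi e1 is a central idempotent of T'_0 = R' x S', because e1 is one of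
   T_0 and phi maps T_0 onto T'_0. *)
Lemma e1_image_central_idempotents : exists a b, phi (mcT_e1 C) = MCT a 0 0 b /\
  (a * a = a /\ forall r, a * r = r * a) /\ (b * b = b /\ forall s, b * s = s * b).
Proof.
have [e1m e1n] : mcT_diagonal (phi (mcT_e1 C)) by apply: phi_diag.
have e1_comm d' : mcT_diagonal d' ->
    mcT_mul (phi (mcT_e1 C)) d' = mcT_mul d' (phi (mcT_e1 C)).
  by case/diagonal_onto=> d [dd <-]; rewrite -!phi_mul mcT_e1_comm_diagonal.
have e1_idem : mcT_mul (phi (mcT_e1 C)) (phi (mcT_e1 C)) = phi (mcT_e1 C).
  by rewrite -phi_mul; congr phi; mcT_simpl.
move: e1_comm e1_idem; case: (phi _) e1m e1n => a m n b /= -> -> e1_comm e1_idem.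
exists a, b; split=> //; split; split.
- by case: e1_idem; mcT_simpl.
- by move=> r; have [] := e1_comm (MCT r 0 0 0) (conj erefl erefl); mcT_simpl.
- by case: e1_idem; mcT_simpl.
- by move=> s; have [] := e1_comm (MCT 0 0 0 s) (conj erefl erefl); mcT_simpl.
Qed.

End BlockPreserving.

Theorem corollary3p8 (C C' : morita_context) :
  indecomposable (mc_R C) -> indecomposable (mc_S C) ->
  indecomposable (mc_R C') -> indecomposable (mc_S C') ->
  forall phi : mcT C -> mcT C', Iso_g phi -> Iso_0 phi.
Proof.
move=> _ _ indR' indS' phi [phi_iso phi_gr].
have [phi_diag phi_off] := graded_preserves_blocks phi_iso phi_gr.
have [a [b [phi_e1 [[a_idem a_central] [b_idem b_central]]]]] :=
  e1_image_central_idempotents phi_iso phi_diag phi_off.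
have phi_inj := ring_iso_inj phi_iso.
case: (indR' a a_idem a_central) (indS' b b_idem b_central) phi_e1 => [] -> [] -> phi_e1.
- (* phi e1 = 0 = phi 0 is impossible *)
  have : mcT_e1 C = mcT_zero C by apply: phi_inj; rewrite phi_e1 ring_iso_zero.
  by case=> /eqP; rewrite oner_eq0.
- by right; apply: e1_to_e2_Iso_01.
- by left; apply: entrywise_Iso_00 phi_iso (e1_fixing_entrywise phi_iso phi_e1).
- (* phi e1 = 1 = phi 1 is impossible *)
  have : mcT_e1 C = mcT_one C by apply: phi_inj; case: phi_iso => _ [_ [_ ->]].
  by case=> /esym/eqP; rewrite oner_eq0.
Qed.
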